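(* Let $(M,M_0)$ be a manifold–submanifold pair, $(X,x_0)$ a based space, $C=C(M,M_0;X)$ and $V=\bigvee_{k\ge1}D_k$. Then $\Psi\circ\sigma=(\sigma\triangle\sigma)\circ\Delta$ as maps $C\to\mathrm{SP}(V\wedge V)$.
   Context: $C(M,M_0;X)$ is the space of finite labelled configurations $\xi_I=\{(m_i,x_i)\}_{i\in I}$ ($m_i\in M$ pairwise distinct, $x_i\in X$) modulo the relation generated by $\xi_I\sim\xi_I\cup\{(m,x)\}$ whenever $m\in M_0$ or $x=x_0$; $\xi_J=\{(m_i,x_i)\}_{i\in J}$ for $J\subseteq I$. $C_k$ is the subspace of configurations with at most $k$ points, $D_k=C_k/C_{k-1}$ based at the collapsed point, $V=\bigvee_{k\ge1}D_k$. For a based space $(Y,e)$, $\mathrm{SP}(Y)$ is the free unital abelian monoid on $Y$ with identity $e$. The scanning map $\sigma:C\to\mathrm{SP}(V)$ is $\xi_I\mapsto\sum_{J\subseteq I}\xi_J$. $\Delta:C\to C\wedge C$ is the diagonal $\xi\mapsto(\xi,\xi)$. $\Psi:V\to\mathrm{SP}(V\wedge V)$ is $\xi_I\mapsto\sum_{A,B\subseteq I,\ A\cup B=I}(\xi_A,\xi_B)$, also denoting its extension to a monoid homomorphism $\mathrm{SP}(V)\to\mathrm{SP}(V\wedge V)$. For based maps $f:A\to\mathrm{SP}(B)$, $g:A'\to\mathrm{SP}(B')$, $f\triangle g:A\wedge A'\to\mathrm{SP}(B\wedge B')$ sends $(a,a')$ to $\sum_{i,j}(b_i,b'_j)$ where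 $f(a)=\sum_i b_i$, $g(a')=\sum_j b'_j$. *)

From Stdlib Require Import Relations Permutation.
From mathcomp Require Import all_boot.

Unset Implicit Arguments.
Unset Strict Implicit.
Unset Printing Implicit Defensive.

Section Config.
Variables (M X : Type) (M0 : M -> Prop) (x0 : X).

(* A (raw) finite labelled configuration: an indexed family of points
   (m_i, x_i), i in I = 'I_n. *)
Record cfg := Cfg { csize : nat; cpt : 'I_csize -> M * X }.
Arguments cpt : clear implicits.

Definition cfg_valid (xi : cfg) : Prop :=
  injective (fun i : 'I_(csize xi) => (cpt xi i).1).

Definition pts (xi : cfg) (p : M * X) : Prop := exists i, cpt xi i = p.

Definition restrict (xi : cfg) (J : {set 'I_(csize xi)}) : cfg :=
  @Cfg #|J| (fun j : 'I_#|J| => cpt xi (enum_val j)).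

Definition cstep (xi xi' : cfg) : Prop :=
  (forall p, pts xi' p <-> pts xi p) \/
  exists (m : M) (x : X), (M0 m \/ x = x0) /\ (forall y, ~ pts xi (m, y)) /\
    (forall p, pts xi' p <-> pts xi p \/ p = (m, x)).

(* equality of points of C = C(M,M0;X): the generated equivalence relation *)
Definition ceq : relation cfg := clos_refl_sym_trans cfg cstep.

Definition inCk (k : nat) (xi : cfg) : Prop :=
  exists xi', ceq xi xi' /\ cfg_valid xi' /\ csize xi' <= k.

(* points of V = \bigvee_{k>=1} D_k, D_k = C_k / C_{k-1}, are represented by
   pairs (k, xi) with xi in C_k; the pair is the basepoint iff xi in C_{k-1}
   (for k = 0, only the empty configuration is used, which is the basepoint). *)
Definition Vpt := (nat * cfg)%type.
Definition vbase (v : Vpt) : Prop := inCk v.1.-1 v.2.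
Definition veq (v w : Vpt) : Prop :=
  (v.1 = w.1 /\ ceq v.2 w.2) \/ (vbase v /\ vbase w).

Definition sbase (p : Vpt * Vpt) : Prop := vbase p.1 \/ vbase p.2.
Definition seqv (p q : Vpt * Vpt) : Prop :=
  (veq p.1 q.1 /\ veq p.2 q.2) \/ (sbase p /\ sbase q).

Definition vel (xi : cfg) (J : {set 'I_(csize xi)}) : Vpt := (#|J|, restrict xi J).

Definition sigma (xi : cfg) : seq Vpt :=
  [seq vel xi J | J <- enum {set 'I_(csize xi)}].

Definition Delta (xi : cfg) : cfg * cfg := (xi, xi).

Definition Psi (v : Vpt) : seq (Vpt * Vpt) :=
  [seq (vel v.2 AB.1, vel v.2 AB.2) |
     AB <- [seq (A, B) | A <- enum {set 'I_(csize v.2)},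
                         B <- enum {set 'I_(csize v.2)}] &
     AB.1 :|: AB.2 == setT].

Definition Psi_SP (s : seq Vpt) : seq (Vpt * Vpt) := flatten (map Psi s).

End Config.

Definition tri (A A' B B' : Type) (f : A -> seq B) (g : A' -> seq B')
  (a : A * A') : seq (B * B') :=
  [seq (b, b') | b <- f a.1, b' <- g a.2].

(* Equality in SP(Y) = free unital abelian monoid on the based set (Y, e),
   where Y is given as a setoid (eqY) and `base` characterizes the basepoint e:
   two formal sums agree iff, after discarding copies of e, they agree as
   multisets of points of Y. *)
Definition sp_eq (Y : Type) (base : Y -> Prop) (eqY : Y -> Y -> Prop)
  (s1 s2 : seq Y) : Prop :=
  exists r1 r2 z1 z2 : seq Y,
    Permutation s1 (r1 ++ z1) /\ Permutation s2 (r2 ++ z2) /\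
    List.Forall base z1 /\ List.Forall base z2 /\ List.Forall2 eqY r1 r2.

(* A pair (J1, J2) of subsets of the index set I of xi is the same thing as
   the subset J = J1 :|: J2 together with a pair (A, B) of subsets of J
   covering J; under this correspondence the term (xi_J1, xi_J2) of
   (sigma triangle sigma)(xi, xi) matches the term ((xi_J)_A, (xi_J)_B) of
   Psi(sigma xi), because (xi_J)_A and xi_{J1} have the same underlying set.
   So the two formal sums agree term by term up to reordering, without
   discarding any basepoint and without using that the m_i are distinct. *)
From Stdlib Require Import Relations Permutation.
From mathcomp Require Import all_boot.

Lemma perm_eq_Permutation (T : eqType) (s t : seq T) :
  perm_eq s t -> Permutation s t.
Proof.
elim: s t => [|x s IH] t eq_st; first by move/perm_size: eq_st; case: t.
have t_x : x \in t by rewrite -(perm_mem eq_st) mem_head.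
case/splitPr: t_x eq_st => t1 t2 eq_st.
apply: Permutation_trans (Permutation_middle t1 t2 x); apply/perm_skip/IH.
rewrite -(perm_cons x); apply: perm_trans eq_st _.
by rewrite -cat1s perm_catCA.
Qed.

Lemma Forall2_allpairs_dep (S : Type) (T : S -> Type) (A B : Type)
    (R : A -> B -> Prop) (f : forall x, T x -> A) (g : forall x, T x -> B)
    (s : seq S) (t : forall x, seq (T x)) :
  (forall x y, R (f x y) (g x y)) ->
  List.Forall2 R [seq f x y | x <- s, y <- t x] [seq g x y | x <- s, y <- t x].
Proof.
move=> Rfg; elim: s => [|x s IH] /=; first by constructor.
apply: List.Forall2_app IH; elim: (t x) => [|y u IHu] /=; by constructor.
Qed.

Lemma sp_eq_Forall2_Permutation (Y : Type) (base : Y -> Prop)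
    (eqY : Y -> Y -> Prop) (s1 s2 t : seq Y) :
  List.Forall2 eqY s1 t -> Permutation s2 t -> sp_eq Y base eqY s1 s2.
Proof.
move=> eq_s1t perm_s2t; exists s1, t, [::], [::].
by rewrite !cats0; do !split.
Qed.

Definition covering_pairs (U : finType) : seq ({set U} * {set U}) :=
  [seq AB <- [seq (A, B) | A <- enum {set U}, B <- enum {set U}]
     | AB.1 :|: AB.2 == setT].

Lemma mem_covering_pairs (U : finType) (AB : {set U} * {set U}) :
  (AB \in covering_pairs U) = (AB.1 :|: AB.2 == setT).
Proof.
rewrite mem_filter andb_idr // => _; case: AB => A B.
by apply/allpairsP; exists (A, B); rewrite !mem_enum.
Qed.

Section LiftSubsets.
Variable T : finType.

Definition lift_set (J : {set T}) (A : {set 'I_#|J|}) : {set T} :=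
  [set enum_val a | a in A].

Lemma lift_set_inj (J : {set T}) : injective (lift_set J).
Proof. exact/imset_inj/enum_val_inj. Qed.

Lemma card_lift_set (J : {set T}) (A : {set 'I_#|J|}) :
  #|lift_set J A| = #|A|.
Proof. exact/card_imset/enum_val_inj. Qed.

Lemma lift_setU (J : {set T}) (A B : {set 'I_#|J|}) :
  lift_set J (A :|: B) = lift_set J A :|: lift_set J B.
Proof. exact: imsetU. Qed.

Lemma lift_set_preimset (J K : {set T}) : K \subset J ->
  lift_set J (enum_val @^-1: K) = K.
Proof.
move=> sKJ; apply/setP => x; apply/imsetP/idP => [[a] | Kx].
  by rewrite inE => Ka ->.
have Jx := subsetP sKJ x Kx.
by exists (enum_rank_in Jx x); rewrite ?inE enum_rankK_in.
Qed.

Lemma preimset_enum_val (J : {set T}) : enum_val @^-1: J = [set: 'I_#|J|].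
Proof. by apply/setP => a; rewrite !inE enum_valP. Qed.

Lemma lift_setT (J : {set T}) : lift_set J setT = J.
Proof. by rewrite -preimset_enum_val lift_set_preimset. Qed.

Lemma lift_covering_pair (J : {set T}) (AB : {set 'I_#|J|} * {set 'I_#|J|}) :
  AB \in covering_pairs _ -> lift_set J AB.1 :|: lift_set J AB.2 = J.
Proof.
by rewrite mem_covering_pairs -lift_setU => /eqP->; exact: lift_setT.
Qed.

Lemma perm_pairs_lift_covering :
  perm_eq [seq (A, B) | A <- enum {set T}, B <- enum {set T}]
    [seq (lift_set J AB.1, lift_set J AB.2)
       | J <- enum {set T}, AB <- covering_pairs 'I_#|J|].
Proof.
apply: uniq_perm.
- by rewrite allpairs_uniq ?enum_uniq // => -[A B] [A' B'] _ _ [-> ->].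
- apply: allpairs_uniq_dep => [|J _|]; first exact: enum_uniq.
    rewrite filter_uniq // allpairs_uniq ?enum_uniq //.
    by move=> -[? ?] [? ?] _ _ [-> ->].
  move=> p q /allpairsPdep[J [AB [_ AB_cov ->]]].
  move=> /allpairsPdep[J' [AB' [_ AB'_cov ->]]] /= [eq1 eq2].
  have eqJ : J = J'.
    move: AB_cov AB'_cov => /lift_covering_pair <- /lift_covering_pair <-.
    by rewrite eq1 eq2.
  subst J'; move: eq1 eq2 => /lift_set_inj eq1 /lift_set_inj eq2.
  by case: AB AB' eq1 eq2 {AB_cov AB'_cov} => ? ? [? ?] /= -> ->.
- move=> [J1 J2]; apply/allpairsP/allpairsPdep => [_ | [J [AB [_ AB_cov ->]]]].
    set J := J1 :|: J2.
    exists J, (enum_val @^-1: J1, enum_val @^-1: J2).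
    split; rewrite ?mem_enum //.
      by rewrite mem_covering_pairs /= -preimsetU preimset_enum_val.
    by rewrite /= !lift_set_preimset ?subsetUl ?subsetUr.
  by exists (lift_set J AB.1, lift_set J AB.2); rewrite !mem_enum.
Qed.

End LiftSubsets.

Arguments lift_set {T} J A.

Section Configurations.
Variables (M X : Type) (M0 : M -> Prop) (x0 : X).

Lemma pts_restrict (xi : cfg M X) (S : {set 'I_(csize M X xi)}) p :
  pts M X (restrict M X xi S) p <-> exists2 i, i \in S & cpt M X xi i = p.
Proof.
split=> [[j /= <-] | [i Si <-]].
  by exists (enum_val j); rewrite ?enum_valP.
by exists (enum_rank_in Si i); rewrite /= enum_rankK_in.
Qed.

Lemma ceq_same_pts (xi xi' : cfg M X) :
  (forall p, pts M X xi' p <-> pts M X xi p) -> ceq M X M0 x0 xi xi'.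
Proof. by move=> same; apply: rst_step; left. Qed.

Lemma pts_restrict_lift (xi : cfg M X) (J : {set 'I_(csize M X xi)})
    (A : {set 'I_#|J|}) p :
  pts M X (restrict M X (restrict M X xi J) A) p <->
  pts M X (restrict M X xi (lift_set J A)) p.
Proof.
rewrite !pts_restrict; split=> [[a Aa <-] | [i /imsetP[a Aa ->] <-]].
  by exists (enum_val a); rewrite ?imset_f.
by exists a.
Qed.

Lemma veq_vel_restrict (xi : cfg M X) (J : {set 'I_(csize M X xi)})
    (A : {set 'I_#|J|}) :
  veq M X M0 x0 (vel M X (restrict M X xi J) A) (vel M X xi (lift_set J A)).
Proof.
left; split; first by rewrite /= card_lift_set.
by apply: ceq_same_pts => p; rewrite pts_restrict_lift.
Qed.

Lemma Psi_SP_sigma (xi : cfg M X) :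
  Psi_SP M X (sigma M X xi) =
  [seq (vel M X (restrict M X xi J) AB.1, vel M X (restrict M X xi J) AB.2)
     | J <- enum {set 'I_(csize M X xi)}, AB <- covering_pairs _].
Proof. by rewrite /Psi_SP /sigma -map_comp. Qed.

Lemma tri_sigma_Delta (xi : cfg M X) :
  tri _ _ _ _ (sigma M X) (sigma M X) (Delta M X xi) =
  map (fun AB => (vel M X xi AB.1, vel M X xi AB.2))
    [seq (A, B) | A <- enum {set 'I_(csize M X xi)},
                  B <- enum {set 'I_(csize M X xi)}].
Proof. by rewrite map_allpairs /tri /sigma allpairs_mapl allpairs_mapr. Qed.

End Configurations.

Theorem proposition2p2 (M X : Type) (M0 : M -> Prop) (x0 : X)
  (xi : cfg M X) (Hxi : cfg_valid M X xi) :
  sp_eq (Vpt M X * Vpt M X) (sbase M X M0 x0) (seqv M X M0 x0)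
    (Psi_SP M X (sigma M X xi))
    (tri (cfg M X) (cfg M X) (Vpt M X) (Vpt M X)
       (sigma M X) (sigma M X) (Delta M X xi)).
Proof.
set lifted := map (fun AB => (vel M X xi AB.1, vel M X xi AB.2))
  [seq (lift_set J AB.1, lift_set J AB.2)
     | J <- enum {set 'I_(csize M X xi)}, AB <- covering_pairs _].
have Psi_sigma_lifted : List.Forall2 (seqv M X M0 x0)
    (Psi_SP M X (sigma M X xi)) lifted.
  rewrite Psi_SP_sigma /lifted map_allpairs.
  apply: Forall2_allpairs_dep => J AB.
  by left; split; apply: veq_vel_restrict.
have tri_lifted :
    Permutation (tri _ _ _ _ (sigma M X) (sigma M X) (Delta M X xi)) lifted.
  rewrite tri_sigma_Delta; apply: Permutation_map.
  exact/perm_eq_Permutation/perm_pairs_lift_covering.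
exact: sp_eq_Forall2_Permutation Psi_sigma_lifted tri_lifted.
Qed.
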